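(* Let $\kappa,\lambda,\mu,\ell\in\mathbb{R}$ and $F(R)=\bigl(h-\lambda R-\tfrac{\kappa}{2}R^2\bigr)^2-(R^2-\mu^2)(R-\ell)$. (i) Let $\mu=0$, $\ell<0$ (so $R_{\min}=0$). There exists $h\in\mathbb{R}$ such that $R=0$ is a root of $F$ of multiplicity at least three if and only if $\ell=-\lambda^2$ (with $\lambda\ne0$). In that case $h=0$ and $F(R)=R^3\bigl(\kappa\lambda-1+\tfrac{\kappa^2}{4}R\bigr)$, so $F'''(0)=6(\kappa\lambda-1)$. (ii) Let $\ell=|\mu|>0$ (so $R_{\min}=\ell$). There exists $h$ such that $R=\ell$ is a root of $F$ of multiplicity at least three if and only if $(\lambda+\kappa\ell)^2=2\ell$. In that case $h=\lambda\ell+\tfrac{\kappa}{2}\ell^2$ and $F(R)=(R-\ell)^3\bigl(\kappa(\lambda+\kappa\ell)-1+\tfrac{\kappa^2}{4}(R-\ell)\bigr)$, so $F'''(\ell)=6\bigl(\kappa(\lambda+\kappa\ell)-1\bigr)$. (iii) Consequently, for $\kappa\ne0$, the root $R_{\min}$ has multiplicity exactly four (degenerate Hamiltonian Hopf bifurcation) precisely at $(\lambda,\mu,\ell)=(1/\kappa,0,-1/\kappa^2)$ and $(\lambda,\mu,\ell)=(1/(2\kappa),\pm1/(2\kappa^2),1/(2\kappa^2))$. (iv) For $\kappa=1$: the Hamiltonian Hopf set with $\mu=0,\ell<0$ is $\{(\lambda,0,-\lambda^2):\lambda\ne0\}$, subcritical ($F'''(0)<0$) for $\lambda<1$ and supercritical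 ($F'''(0)>0$) for $\lambda>1$; the Hamiltonian Hopf set with $\ell=|\mu|>0$ consists of the points $(\lambda,\pm\ell,\ell)$ with $\lambda\le\tfrac12$ and $\ell=1-\lambda\pm\sqrt{1-2\lambda}>0$, where $F'''(\ell)=\pm6\sqrt{1-2\lambda}$, so the branch $\ell=1-\lambda-\sqrt{1-2\lambda}$ ($\lambda<\tfrac12$, $\lambda\neq0$) is subcritical and the branch $\ell=1-\lambda+\sqrt{1-2\lambda}$ ($\lambda<\tfrac12$) is supercritical, the two meeting at the degenerate point $(\tfrac12,\pm\tfrac12,\tfrac12)$.
   Context: $R_{\min}=\max(|\mu|,\ell)$. A Hamiltonian Hopf bifurcation of the reduced system (energy $\mathcal{H}_\lambda=X+\lambda R+\tfrac{\kappa}{2}R^2$ on $\mathcal{P}_{\mu\ell}=\{R\ge R_{\min},\,X^2+Y^2=(R^2-\mu^2)(R-\ell)\}$, which is singular at its tip $(R_{\min},0,0)$ exactly when $\ell=|\mu|$ or $\mu=0,\ell\le0$) is characterised by $F$ having a root of multiplicity at least three at $R=R_{\min}$; it is called supercritical if $F'''(R_{\min})>0$, subcritical if $F'''(R_{\min})<0$, and degenerate if $F'''(R_{\min})=0$. *)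

(* the statement is purely algebraic (polynomial identities,
   divisibility, signs, square roots), so it is stated over an arbitrary
   real closed field R (which includes the real numbers). *)
From HB Require Import structures.
From mathcomp Require Import all_boot all_order all_algebra.
Set Implicit Arguments. Unset Strict Implicit. Unset Printing Implicit Defensive.
Import Order.TTheory GRing.Theory Num.Theory.
Local Open Scope ring_scope.

Definition Fpoly (R : rcfType) (k l m ell h : R) : {poly R} :=
  (h%:P - l%:P * 'X - (k / 2)%:P * 'X^2) ^+ 2
  - ('X^2 - (m ^+ 2)%:P) * ('X - ell%:P).

Definition root_mult_ge (R : rcfType) (n : nat) (p : {poly R}) (x : R) : Prop :=
  ('X - x%:P) ^+ n %| p.

Definition root_mult_eq (R : rcfType) (n : nat) (p : {poly R}) (x : R) : Prop :=
  root_mult_ge n p x /\ ~ root_mult_ge n.+1 p x.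

Definition Rmin (R : rcfType) (m ell : R) : R := Num.max `|m| ell.

(** Expanding [F] in powers of [R - x] gives coefficients [c0, ..., c4] with
    [c4 = kappa^2/4] and [c3 = kappa (lambda + kappa x) - 1], so [x] is a root of
    multiplicity at least three iff [c0 = c1 = c2 = 0], and of multiplicity
    exactly four iff moreover [c3 = 0] and [kappa <> 0].  At [x = R_min] the
    condition [c0 = 0] is a perfect square (the term [(R^2 - mu^2)(R - ell)]
    vanishes there), which forces the value of [h]; [c2 = 0] then becomes the
    quadratic relation between [lambda] and [ell], and [F'''(x) = 6 c3]. *)
From HB Require Import structures.
From mathcomp Require Import all_boot all_order all_algebra.
From mathcomp Require Import ring lra.
Import Order.TTheory GRing.Theory Num.Theory.
Local Open Scope ring_scope.

Definition taylor4 {R : nzRingType} (x c0 c1 c2 c3 c4 : R) : {poly R} :=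
  c0%:P + ('X - x%:P) * (c1%:P + ('X - x%:P) *
    (c2%:P + ('X - x%:P) * (c3%:P + ('X - x%:P) * c4%:P))).

Lemma taylor4_000 (R : comNzRingType) (x c3 c4 : R) :
  taylor4 x 0 0 0 c3 c4 = ('X - x%:P) ^+ 3 * (c3%:P + c4%:P * ('X - x%:P)).
Proof. by rewrite /taylor4 polyC0; ring. Qed.

Lemma dvdp_expXsubC_CaddX (R : idomainType) (x c : R) (n : nat) (q : {poly R}) :
  (('X - x%:P) ^+ n.+1 %| c%:P + ('X - x%:P) * q) = (c == 0) && (('X - x%:P) ^+ n %| q).
Proof.
have [->|c0] := eqVneq c 0.
  by rewrite add0r exprS dvdp_mul2l ?polyXsubC_eq0.
apply/negbTE/negP => dvd_cq.
have : ('X - x%:P) %| c%:P + ('X - x%:P) * q.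
  by apply: dvdp_trans dvd_cq; rewrite exprS dvdp_mulr.
by rewrite dvdp_addl ?dvdp_mulr // dvdp_XsubCl rootC (negbTE c0).
Qed.

Section Taylor4.
Variables (R : idomainType) (x c0 c1 c2 c3 c4 : R).

Lemma dvdp_taylor4_3 :
  (('X - x%:P) ^+ 3 %| taylor4 x c0 c1 c2 c3 c4) = [&& c0 == 0, c1 == 0 & c2 == 0].
Proof. by rewrite !dvdp_expXsubC_CaddX expr0 dvd1p andbT. Qed.

Lemma dvdp_taylor4_4 :
  (('X - x%:P) ^+ 4 %| taylor4 x c0 c1 c2 c3 c4) = [&& c0 == 0, c1 == 0, c2 == 0 & c3 == 0].
Proof. by rewrite !dvdp_expXsubC_CaddX expr0 dvd1p andbT. Qed.

Lemma dvdp_taylor4_5 :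
  (('X - x%:P) ^+ 5 %| taylor4 x c0 c1 c2 c3 c4)
  = [&& c0 == 0, c1 == 0, c2 == 0, c3 == 0 & c4 == 0].
Proof. by rewrite !dvdp_expXsubC_CaddX expr1 dvdp_XsubCl rootC. Qed.

End Taylor4.

Lemma derivn3_expXsubC_mul (R : comNzRingType) (x : R) (r : {poly R}) :
  (('X - x%:P) ^+ 3 * r)^`(3).[x] = 6 * r.[x].
Proof.
have derivYM q : (('X - x%:P) * q)^`() = q + ('X - x%:P) * q^`().
  by rewrite derivM derivXsubC mul1r.
rewrite /= !exprS expr0 mulr1 -!mulrA !(derivYM, derivD).
rewrite !(hornerD, hornerM, hornerXsubC, hornerX, hornerN, hornerC) subrr.
ring.
Qed.

Lemma sqr_eq_sqrt (R : rcfType) (a b : R) :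
  a ^+ 2 = b <-> 0 <= b /\ (a = Num.sqrt b \/ a = - Num.sqrt b).
Proof.
split => [<- | [b_ge0 a_eq]]; last by case: a_eq => ->; rewrite ?sqrrN sqr_sqrtr.
split; first exact: sqr_ge0.
have : a ^+ 2 == Num.sqrt (a ^+ 2) ^+ 2 by rewrite sqr_sqrtr ?sqr_ge0.
by rewrite eqf_sqr => /orP[] /eqP; [left | right].
Qed.

Section HopfPolynomial.
Variable R : rcfType.
Implicit Types k l m ell h x : R.

Lemma Fpoly_taylor k l m ell h x :
  let g := h - l * x - k / 2 * x ^+ 2 in
  Fpoly k l m ell h =
  taylor4 x (g ^+ 2 - (x ^+ 2 - m ^+ 2) * (x - ell))
    (- 2 * g * (l + k * x) - (x ^+ 2 - m ^+ 2) - 2 * x * (x - ell))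
    ((l + k * x) ^+ 2 - k * g - (3 * x - ell))
    (k * (l + k * x) - 1) ((k / 2) ^+ 2).
Proof.
move=> g; rewrite {}/g /Fpoly /taylor4.
(* [ring] does not know [2 / 2 = 1], so [k] is written as twice a fresh variable. *)
have k_half : k = 2 * (k / 2) by rewrite mulrC divfK ?pnatr_eq0.
move: (k / 2) k_half => q ->.
rewrite !(polyCD, polyCM, polyCN, polyCB, rmorphXn); ring.
Qed.

Lemma Fpoly_mult3_0 k l ell h :
  root_mult_ge 3 (Fpoly k l 0 ell h) 0 <-> h = 0 /\ ell = - l ^+ 2.
Proof.
rewrite /root_mult_ge (Fpoly_taylor _ _ _ _ _ 0) dvdp_taylor4_3.
split => [/and3P[/eqP c0 /eqP _ /eqP c2] | [-> ->]]; last first.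
  by apply/and3P; split; apply/eqP; ring.
have : h ^+ 2 == 0 by rewrite -c0; apply/eqP; ring.
rewrite sqrf_eq0 => /eqP h0; split => //.
by apply/eqP; rewrite -subr_eq0 -c2 h0; apply/eqP; ring.
Qed.

Lemma Fpoly_mult3_ell {m ell} k l h : m ^+ 2 = ell ^+ 2 ->
  root_mult_ge 3 (Fpoly k l m ell h) ell <->
  h = l * ell + k / 2 * ell ^+ 2 /\ (l + k * ell) ^+ 2 = 2 * ell.
Proof.
move=> m2; rewrite /root_mult_ge (Fpoly_taylor _ _ _ _ _ ell) m2 dvdp_taylor4_3.
split => [/and3P[/eqP c0 /eqP _ /eqP c2] | [-> E]]; last first.
  by apply/and3P; split; apply/eqP; rewrite ?E; ring.
have : (h - l * ell - k / 2 * ell ^+ 2) ^+ 2 == 0.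
  by rewrite -c0; apply/eqP; ring.
rewrite sqrf_eq0 => /eqP g0; split.
  by apply/eqP; rewrite -subr_eq0 -g0; apply/eqP; ring.
by apply/eqP; rewrite -subr_eq0 -c2 g0; apply/eqP; ring.
Qed.

Lemma Fpoly_factor_0 k l :
  Fpoly k l 0 (- l ^+ 2) 0 = 'X^3 * ((k * l - 1)%:P + (k ^+ 2 / 4)%:P * 'X).
Proof.
have -> : 'X = 'X - 0%:P :> {poly R} by rewrite subr0.
rewrite (Fpoly_taylor _ _ _ _ _ 0) expr_div_n -natrX -taylor4_000.
by congr taylor4; ring.
Qed.

Lemma Fpoly_factor_ell k l m ell : m ^+ 2 = ell ^+ 2 ->
  (l + k * ell) ^+ 2 = 2 * ell ->
  Fpoly k l m ell (l * ell + k / 2 * ell ^+ 2)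
  = ('X - ell%:P) ^+ 3 * ((k * (l + k * ell) - 1)%:P + (k ^+ 2 / 4)%:P * ('X - ell%:P)).
Proof.
move=> m2 E; rewrite (Fpoly_taylor _ _ _ _ _ ell) m2 E expr_div_n -natrX -taylor4_000.
by congr taylor4; ring.
Qed.

Lemma Fpoly_derivn3_0 k l :
  (Fpoly k l 0 (- l ^+ 2) 0)^`(3).[0] = 6 * (k * l - 1).
Proof.
have X3 : 'X^3 = ('X - 0%:P) ^+ 3 :> {poly R} by rewrite subr0.
rewrite Fpoly_factor_0 X3 derivn3_expXsubC_mul.
by rewrite !hornerE; ring.
Qed.

Lemma Fpoly_derivn3_ell k l m ell : m ^+ 2 = ell ^+ 2 ->
  (l + k * ell) ^+ 2 = 2 * ell ->
  (Fpoly k l m ell (l * ell + k / 2 * ell ^+ 2))^`(3).[ell]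
  = 6 * (k * (l + k * ell) - 1).
Proof.
by move=> m2 E; rewrite Fpoly_factor_ell // derivn3_expXsubC_mul !hornerE; ring.
Qed.

Lemma Fpoly_mult4 k l m ell h x :
  root_mult_eq 4 (Fpoly k l m ell h) x <->
  root_mult_ge 3 (Fpoly k l m ell h) x /\ k * (l + k * x) = 1 /\ k != 0.
Proof.
rewrite /root_mult_eq /root_mult_ge (Fpoly_taylor _ _ _ _ _ x).
rewrite dvdp_taylor4_3 dvdp_taylor4_4 dvdp_taylor4_5.
split => [[/and4P[c0 c1 c2 /eqP c3] not5] | [/and3P[c0 c1 c2] [c3 k0]]].
  split; first by apply/and3P.
  split; first by apply/eqP; rewrite -subr_eq0 c3.
  apply/negP => /eqP k0; apply: not5; apply/and5P; split; rewrite ?c3 //.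
  by rewrite k0 mul0r expr2 mulr0.
split; first by apply/and4P; split; rewrite // c3 subrr.
by case/and5P => _ _ _ _; rewrite sqrf_eq0 mulf_eq0 invr_eq0 pnatr_eq0 orbF (negbTE k0).
Qed.

Lemma sqr_eq_of_norm (m ell : R) : ell = `|m| -> m ^+ 2 = ell ^+ 2.
Proof. by move->; rewrite real_normK ?num_real. Qed.

Lemma hopf_mu0 k l ell : ell < 0 ->
  ((exists h, root_mult_ge 3 (Fpoly k l 0 ell h) 0) <-> (ell = - l ^+ 2 /\ l != 0))
  /\ (forall h, root_mult_ge 3 (Fpoly k l 0 ell h) 0 ->
       [/\ h = 0, Fpoly k l 0 ell h = 'X^3 * ((k * l - 1)%:P + (k ^+ 2 / 4)%:P * 'X)
         & (Fpoly k l 0 ell h)^`(3).[0] = 6 * (k * l - 1)]).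
Proof.
move=> ell_lt0; split.
  split => [[h /Fpoly_mult3_0[_ E]] | [E _]]; last by exists 0; apply/Fpoly_mult3_0.
  by split => //; apply/eqP => l0; move: ell_lt0; rewrite E l0 expr2 mulr0 oppr0 ltxx.
move=> h /Fpoly_mult3_0[-> ->].
by split; [|exact: Fpoly_factor_0|exact: Fpoly_derivn3_0].
Qed.

Lemma hopf_ell_absmu {m ell} k l : ell = `|m| ->
  ((exists h, root_mult_ge 3 (Fpoly k l m ell h) ell) <-> (l + k * ell) ^+ 2 = 2 * ell)
  /\ (forall h, root_mult_ge 3 (Fpoly k l m ell h) ell ->
       [/\ h = l * ell + k / 2 * ell ^+ 2,
           Fpoly k l m ell h
           = ('X - ell%:P) ^+ 3 *
             ((k * (l + k * ell) - 1)%:P + (k ^+ 2 / 4)%:P * ('X - ell%:P))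
         & (Fpoly k l m ell h)^`(3).[ell] = 6 * (k * (l + k * ell) - 1)]).
Proof.
move=> /sqr_eq_of_norm m2; split.
  split => [[h /(Fpoly_mult3_ell _ _ _ m2)[]] // | E].
  by exists (l * ell + k / 2 * ell ^+ 2); apply/(Fpoly_mult3_ell _ _ _ m2).
move=> h /(Fpoly_mult3_ell _ _ _ m2)[-> E].
by split; [|exact: Fpoly_factor_ell|exact: Fpoly_derivn3_ell].
Qed.

Lemma degenerate_hopf_mu0 k l ell : k != 0 ->
  (exists h, root_mult_eq 4 (Fpoly k l 0 ell h) 0)
  <-> l = 1 / k /\ ell = - 1 / k ^+ 2.
Proof.
move=> k0; split => [[h /Fpoly_mult4[/Fpoly_mult3_0[_ ->] [kl _]]] | [-> ->]].
  have l_eq : l = 1 / k by rewrite -kl; field.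
  by split; rewrite // l_eq; field.
exists 0; apply/Fpoly_mult4.
by split; [apply/Fpoly_mult3_0; split | split]; rewrite // ?mulr0 ?addr0; field.
Qed.

Lemma degenerate_hopf_ell k l m ell : k != 0 -> m ^+ 2 = ell ^+ 2 ->
  (exists h, root_mult_eq 4 (Fpoly k l m ell h) ell)
  <-> l = 1 / (2 * k) /\ ell = 1 / (2 * k ^+ 2).
Proof.
move=> k0 m2; split => [[h] | [l_eq ell_eq]]; last first.
  exists (l * ell + k / 2 * ell ^+ 2); apply/Fpoly_mult4.
  split; first by apply/(Fpoly_mult3_ell _ _ _ m2); split; rewrite // l_eq ell_eq; field.
  by split; rewrite // l_eq ell_eq; field.
case/Fpoly_mult4 => /(Fpoly_mult3_ell _ _ _ m2)[_ E] [kl _].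
have d_eq : l + k * ell = 1 / k by rewrite -kl; field.
have ell_eq : ell = 1 / (2 * k ^+ 2).
  apply: (@mulfI _ 2); first by rewrite pnatr_eq0.
  by rewrite -E d_eq; field.
split => //; have -> : l = (l + k * ell) - k * ell by ring.
by rewrite d_eq ell_eq; field.
Qed.

Lemma degenerate_hopf k l m ell : k != 0 ->
  (m = 0 /\ ell < 0) \/ (ell = `|m| /\ 0 < ell) ->
  (exists h, root_mult_eq 4 (Fpoly k l m ell h) (Rmin m ell))
  <-> (l = 1 / k /\ m = 0 /\ ell = - 1 / k ^+ 2)
      \/ (l = 1 / (2 * k) /\ (m = 1 / (2 * k ^+ 2) \/ m = - (1 / (2 * k ^+ 2)))
          /\ ell = 1 / (2 * k ^+ 2)).
Proof.
move=> k0 [[-> ell_lt0] | [ell_m ell_gt0]].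
  have ell_neq0 : 1 / (2 * k ^+ 2) != 0.
    by rewrite mul1r invr_eq0 mulf_neq0 ?expf_neq0 ?pnatr_eq0.
  have -> : Rmin 0 ell = 0 by rewrite /Rmin normr0 max_l ?ltW.
  rewrite degenerate_hopf_mu0 //.
  split => [[? ?] | [[? [_ ?]] | [_ [m0 _]]]]; [by left | by [] |].
  by exfalso; case: m0 => /esym /eqP; rewrite ?oppr_eq0 (negbTE ell_neq0).
have -> : Rmin m ell = ell by rewrite /Rmin -ell_m maxxx.
rewrite degenerate_hopf_ell //; last exact: sqr_eq_of_norm ell_m.
split => [[l_eq e_eq] | [[_ [m0 _]] | [? [_ ?]]]]; last by [].
  right; split => //; split => //; rewrite -e_eq ell_m.
  by case: (ger0P m) => _; [left | right; rewrite opprK].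
by move: ell_gt0; rewrite ell_m m0 normr0 ltxx.
Qed.

Lemma hopf_mu0_kappa1 l ell : ell < 0 ->
  ((exists h, root_mult_ge 3 (Fpoly 1 l 0 ell h) 0) <-> (ell = - l ^+ 2 /\ l != 0))
  /\ (forall h, root_mult_ge 3 (Fpoly 1 l 0 ell h) 0 ->
       (l < 1 -> (Fpoly 1 l 0 ell h)^`(3).[0] < 0)
       /\ (1 < l -> 0 < (Fpoly 1 l 0 ell h)^`(3).[0])).
Proof.
move=> /(hopf_mu0 1 l)[hopf F3]; split => // h /F3[_ _ ->].
by split=> ?; lra.
Qed.

(** For [kappa = 1] the relation [(lambda + ell)^2 = 2 ell] is
    [(ell - (1 - lambda))^2 = 1 - 2 lambda], and [F'''(ell) = 6 (ell - (1 - lambda))]. *)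
Lemma hopf_ell_absmu_kappa1 l m ell : ell = `|m| -> 0 < ell ->
  ((exists h, root_mult_ge 3 (Fpoly 1 l m ell h) ell)
     <-> (l <= 1 / 2 /\
          (ell = 1 - l + Num.sqrt (1 - 2 * l) \/ ell = 1 - l - Num.sqrt (1 - 2 * l))))
  /\ (forall h, root_mult_ge 3 (Fpoly 1 l m ell h) ell ->
       (ell = 1 - l + Num.sqrt (1 - 2 * l) ->
          (Fpoly 1 l m ell h)^`(3).[ell] = 6 * Num.sqrt (1 - 2 * l)
          /\ (l < 1 / 2 -> 0 < (Fpoly 1 l m ell h)^`(3).[ell]))
       /\ (ell = 1 - l - Num.sqrt (1 - 2 * l) ->
          (Fpoly 1 l m ell h)^`(3).[ell] = - (6 * Num.sqrt (1 - 2 * l))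
          /\ (l < 1 / 2 -> l != 0 /\ (Fpoly 1 l m ell h)^`(3).[ell] < 0))).
Proof.
move=> ell_m ell_gt0; have [hopf F3] := hopf_ell_absmu 1 l ell_m.
set s := Num.sqrt (1 - 2 * l).
have s_gt0 : l < 1 / 2 -> 0 < s by move=> l_lt; rewrite sqrtr_gt0; lra.
split.
  have shift : (l + 1 * ell) ^+ 2 - 2 * ell = (ell - (1 - l)) ^+ 2 - (1 - 2 * l) by ring.
  rewrite hopf; split => [/eqP | [l_le ell_eq]].
    rewrite -subr_eq0 shift subr_eq0 => /eqP /sqr_eq_sqrt[s_ge0]; rewrite -/s => ell_eq.
    by split; [lra | case: ell_eq => ?; [left | right]; lra].
  apply/eqP; rewrite -subr_eq0 shift subr_eq0; apply/eqP/sqr_eq_sqrt; rewrite -/s.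
  by split; [lra | case: ell_eq => ->; [left | right]; ring].
move=> h /F3[_ _ ->]; split => ell_eq; rewrite ell_eq.
  by split => [|/s_gt0 ?]; [ring | lra].
split => [|l_lt]; first ring.
split; last by have := s_gt0 l_lt; lra.
apply/eqP => l0; move: ell_gt0; rewrite ell_eq /s l0 mulr0 subr0 sqrtr1; lra.
Qed.

Lemma hopf_branches_meet_kappa1 m : `|m| = 1 / 2 ->
  (1 / 2 = 1 - 1 / 2 + Num.sqrt (1 - 2 * (1 / 2)) :> R)
  /\ (1 / 2 = 1 - 1 / 2 - Num.sqrt (1 - 2 * (1 / 2)) :> R)
  /\ (exists h, root_mult_ge 3 (Fpoly 1 (1 / 2) m (1 / 2) h) (1 / 2))
  /\ (forall h, root_mult_ge 3 (Fpoly 1 (1 / 2) m (1 / 2) h) (1 / 2) ->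
        (Fpoly 1 (1 / 2) m (1 / 2) h)^`(3).[1 / 2] = 0).
Proof.
move=> /esym /(hopf_ell_absmu 1 (1 / 2))[hopf F3].
have -> : 1 - 2 * (1 / 2) = 0 :> R by field.
rewrite sqrtr0; split; first by field.
split; first by field.
split; first by apply/hopf; field.
by move=> h /F3[_ _ ->]; field.
Qed.

End HopfPolynomial.

Theorem mainTheorem6 (R : rcfType) :
  (* (i) mu = 0, ell < 0 *)
  (forall k l ell : R, ell < 0 ->
     ((exists h : R, root_mult_ge 3 (Fpoly k l 0 ell h) 0)
        <-> (ell = - l ^+ 2 /\ l != 0))
     /\ (forall h : R, root_mult_ge 3 (Fpoly k l 0 ell h) 0 ->
          [/\ h = 0,
              Fpoly k l 0 ell h
                = 'X^3 * ((k * l - 1)%:P + (k ^+ 2 / 4)%:P * 'X)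
            & (Fpoly k l 0 ell h)^`(3).[0] = 6 * (k * l - 1)]))
  /\
  (* (ii) ell = |mu| > 0 *)
  (forall k l m ell : R, ell = `|m| -> 0 < ell ->
     ((exists h : R, root_mult_ge 3 (Fpoly k l m ell h) ell)
        <-> (l + k * ell) ^+ 2 = 2 * ell)
     /\ (forall h : R, root_mult_ge 3 (Fpoly k l m ell h) ell ->
          [/\ h = l * ell + k / 2 * ell ^+ 2,
              Fpoly k l m ell h
                = ('X - ell%:P) ^+ 3 *
                  ((k * (l + k * ell) - 1)%:P + (k ^+ 2 / 4)%:P * ('X - ell%:P))
            & (Fpoly k l m ell h)^`(3).[ell] = 6 * (k * (l + k * ell) - 1)]))
  /\
  (* (iii) degenerate points, kappa <> 0 *)
  (forall k l m ell : R, k != 0 ->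
     ((m = 0 /\ ell < 0) \/ (ell = `|m| /\ 0 < ell)) ->
     ((exists h : R, root_mult_eq 4 (Fpoly k l m ell h) (Rmin m ell))
        <-> ((l = 1 / k /\ m = 0 /\ ell = - 1 / k ^+ 2)
             \/ (l = 1 / (2 * k) /\ (m = 1 / (2 * k ^+ 2) \/ m = - (1 / (2 * k ^+ 2)))
                 /\ ell = 1 / (2 * k ^+ 2)))))
  /\
  (* (iv) kappa = 1 *)
  ((forall l ell : R, ell < 0 ->
      ((exists h : R, root_mult_ge 3 (Fpoly 1 l 0 ell h) 0)
         <-> (ell = - l ^+ 2 /\ l != 0))
      /\ (forall h : R, root_mult_ge 3 (Fpoly 1 l 0 ell h) 0 ->
           (l < 1 -> (Fpoly 1 l 0 ell h)^`(3).[0] < 0)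
           /\ (1 < l -> 0 < (Fpoly 1 l 0 ell h)^`(3).[0])))
   /\
   (forall l m ell : R, ell = `|m| -> 0 < ell ->
      ((exists h : R, root_mult_ge 3 (Fpoly 1 l m ell h) ell)
         <-> (l <= 1 / 2 /\
              (ell = 1 - l + Num.sqrt (1 - 2 * l) \/
               ell = 1 - l - Num.sqrt (1 - 2 * l))))
      /\ (forall h : R, root_mult_ge 3 (Fpoly 1 l m ell h) ell ->
           (ell = 1 - l + Num.sqrt (1 - 2 * l) ->
              (Fpoly 1 l m ell h)^`(3).[ell] = 6 * Num.sqrt (1 - 2 * l)
              /\ (l < 1 / 2 -> 0 < (Fpoly 1 l m ell h)^`(3).[ell]))
           /\
           (ell = 1 - l - Num.sqrt (1 - 2 * l) ->
              (Fpoly 1 l m ell h)^`(3).[ell] = - (6 * Num.sqrt (1 - 2 * l))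
              /\ (l < 1 / 2 -> l != 0 /\ (Fpoly 1 l m ell h)^`(3).[ell] < 0))))
   /\
   (* the two branches meet at the degenerate point (1/2, +-1/2, 1/2) *)
   (forall m : R, `|m| = 1 / 2 ->
      (1 / 2 = 1 - 1 / 2 + Num.sqrt (1 - 2 * (1 / 2)) :> R)
      /\ (1 / 2 = 1 - 1 / 2 - Num.sqrt (1 - 2 * (1 / 2)) :> R)
      /\ (exists h : R, root_mult_ge 3 (Fpoly 1 (1 / 2) m (1 / 2) h) (1 / 2))
      /\ (forall h : R, root_mult_ge 3 (Fpoly 1 (1 / 2) m (1 / 2) h) (1 / 2) ->
            (Fpoly 1 (1 / 2) m (1 / 2) h)^`(3).[1 / 2] = 0))).
Proof.
split; first exact: hopf_mu0.
split; first by move=> k l m ell ell_m _; exact: hopf_ell_absmu.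
split; first exact: degenerate_hopf.
split; first exact: hopf_mu0_kappa1.
split; first exact: hopf_ell_absmu_kappa1.
exact: hopf_branches_meet_kappa1.
Qed.
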